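(* Let $0\le m<a<M\le1$, $k\ge0$ and $b,c>1$, and let $\omega(t)=-kt-(b-1)\ln t-(c-1)\ln(1-t)$ for $0<t<1$. (i) If $\omega'(a)>0$, then $$\int_a^M e^{-\omega(t)}\,dt\le\frac{e^{ka}a^{b-1}(1-a)^{c-1}}{\omega'(a)}$$ and $$\int_a^M e^{-\omega(t)}\,dt\ge\frac{e^{ka}a^{b-1}(1-a)^{c-1}}{\omega'(M)}\left(1-\exp\{-(M-a)\omega'(a)\}\right).$$ (ii) If $\omega'(a)<0$, then $$\int_m^a e^{-\omega(t)}\,dt\le\frac{e^{ka}a^{b-1}(1-a)^{c-1}}{-\omega'(a)}$$ and $$\int_m^a e^{-\omega(t)}\,dt\ge\frac{e^{ka}a^{b-1}(1-a)^{c-1}}{-\omega'(m)}\left(1-\exp\{(a-m)\omega'(a)\}\right).$$ *)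

From Stdlib Require Import Reals.
From Coquelicot Require Import Coquelicot.
Open Scope R_scope.

Definition omega (k b c : R) (t : R) : R :=
  - k * t - (b - 1) * ln t - (c - 1) * ln (1 - t).

Definition pref (k b c a : R) : R :=
  exp (k * a) * Rpower a (b - 1) * Rpower (1 - a) (c - 1).

(* omega' = -k - (b-1)/t + (c-1)/(1-t) is nondecreasing on (0,1), so omega lies above its
   tangents and exp (- omega t) <= exp (- omega a - omega'(a) (t - a)); integrating this
   exponential gives the upper bounds.  For the lower bounds, |omega'| is bounded on the
   integration interval by its value D at the far endpoint, hence
   D * int exp (- omega) >= |int exp (- omega) omega'| = |exp (- omega a) - exp (- omega e)|,
   and the tangent bound at the far endpoint e controls exp (- omega e).  The prefactor
   e^{ka} a^{b-1} (1-a)^{c-1} is exp (- omega a). *)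
From Stdlib Require Import Reals Lra.
From Coquelicot Require Import Coquelicot.
Open Scope R_scope.

Lemma tangent_le_of_derive_nondecreasing (f f' : R -> R) (lo hi s t : R) :
  (forall x, lo < x < hi -> is_derive f x (f' x)) ->
  (forall x y, lo < x -> x <= y -> y < hi -> f' x <= f' y) ->
  lo < s < hi -> lo < t < hi ->
  f s + f' s * (t - s) <= f t.
Proof.
  intros hf hf' hs ht.
  assert (hst : forall x, Rmin s t <= x <= Rmax s t -> lo < x < hi).
  { intros x hx. unfold Rmin, Rmax in hx. destruct (Rle_dec s t); lra. }
  destruct (MVT_gen f s t f') as [xi [hxi hmvt]].
  - intros x hx. apply hf, hst. lra.
  - intros x hx. apply continuity_pt_filterlim, (ex_derive_continuous f).
    eexists. apply hf, hst, hx.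
  - unfold Rmin, Rmax in hxi. destruct (Rle_dec s t).
    + assert (f' s <= f' xi) by (apply hf'; lra). nra.
    + assert (f' xi <= f' s) by (apply hf'; lra). nra.
Qed.

Lemma is_RInt_exp_affine (p W a x y : R) : W <> 0 ->
  is_RInt (fun t => p * exp (- (W * (t - a)))) x y
    (p / W * (exp (- (W * (x - a))) - exp (- (W * (y - a))))).
Proof.
  intros hW.
  replace (p / W * (exp (- (W * (x - a))) - exp (- (W * (y - a))))) with
    (minus (- p / W * exp (- (W * (y - a)))) (- p / W * exp (- (W * (x - a))))).
  - apply (is_RInt_derive (fun t => - p / W * exp (- (W * (t - a))))).
    + intros t _. auto_derive; [easy |].
      replace (t + - a) with (t - a) by ring. field. exact hW.
    + intros t _. apply (ex_derive_continuous (fun t => p * exp (- (W * (t - a))))).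
      auto_derive. easy.
  - unfold minus, plus, opp; simpl. field. exact hW.
Qed.

(* [Rpower 0 y = exp (y * ln 0) = 1] is a junk value; this is the continuous extension. *)
Definition Rpower0 (x y : R) : R := if Rlt_dec 0 x then Rpower x y else 0.

Lemma continuous_Rpower0 (y x : R) : 0 < y -> 0 <= x -> continuous (fun u => Rpower0 u y) x.
Proof.
  intros hy hx. destruct (Rle_lt_or_eq_dec 0 x hx) as [hx0 | <-].
  - apply (continuous_ext_loc _ (fun u => exp (y * ln u))).
    + apply (locally_interval _ x 0 p_infty); [exact hx0 | exact I |].
      intros u hu _. unfold Rpower0, Rpower. now destruct (Rlt_dec 0 u).
    + apply (ex_derive_continuous (fun u => exp (y * ln u))). auto_derive. exact hx0.
  - apply filterlim_locally. intros eps.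
    assert (hdelta : 0 < Rpower eps (/ y)) by apply exp_pos.
    exists (mkposreal _ hdelta). intros u hu.
    change (Rabs (u - 0) < Rpower eps (/ y)) in hu.
    change (Rabs (Rpower0 u y - Rpower0 0 y) < eps).
    unfold Rpower0. destruct (Rlt_dec 0 0) as [h0 | _]; [lra |].
    destruct (Rlt_dec 0 u) as [hu0 | _].
    + rewrite Rminus_0_r, Rabs_pos_eq in * by (try apply Rlt_le, exp_pos; lra).
      rewrite <- (Rpower_1 eps) by apply cond_pos.
      replace 1 with (/ y * y) by (field; lra).
      rewrite <- Rpower_mult. apply Rlt_Rpower_l; lra.
    + rewrite Rminus_0_r, Rabs_R0. apply cond_pos.
Qed.

Definition domega (k b c t : R) : R := - k - (b - 1) / t + (c - 1) / (1 - t).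

Lemma is_derive_omega (k b c t : R) : 0 < t < 1 -> is_derive (omega k b c) t (domega k b c t).
Proof. intros ht. unfold omega, domega. auto_derive; [lra | field; lra]. Qed.

Lemma Derive_omega (k b c t : R) : 0 < t < 1 -> Derive (omega k b c) t = domega k b c t.
Proof. intros ht. apply is_derive_unique, is_derive_omega, ht. Qed.

Lemma pref_exp_omega (k b c a : R) : 0 < a < 1 -> pref k b c a = exp (- omega k b c a).
Proof.
  intros ha. unfold pref, omega, Rpower. rewrite <- !exp_plus. f_equal. ring.
Qed.

Section Convexity.

Variables k b c : R.
Hypotheses (hb : 1 <= b) (hc : 1 <= c).

Lemma domega_le (s t : R) : 0 < s -> s <= t -> t < 1 -> domega k b c s <= domega k b c t.
Proof.
  intros hs hst ht. unfold domega, Rdiv.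
  assert (/ t <= / s) by (apply Rinv_le_contravar; lra).
  assert (/ (1 - s) <= / (1 - t)) by (apply Rinv_le_contravar; lra).
  nra.
Qed.

Lemma exp_omega_le_tangent (a t : R) : 0 < a < 1 -> 0 < t < 1 ->
  exp (- omega k b c t) <= exp (- omega k b c a) * exp (- (domega k b c a * (t - a))).
Proof.
  intros ha ht. rewrite <- exp_plus.
  enough (omega k b c a + domega k b c a * (t - a) <= omega k b c t).
  { apply Rnot_lt_le. intros hlt. apply exp_lt_inv in hlt. lra. }
  apply (tangent_le_of_derive_nondecreasing _ _ 0 1); auto.
  - apply is_derive_omega.
  - apply domega_le.
Qed.

End Convexity.

Section Integrals.

Variables k b c : R.
Hypotheses (hb : 1 < b) (hc : 1 < c).

Local Notation E t := (exp (- omega k b c t)).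
Local Notation dw := (domega k b c).

(* The integrand agrees on (0,1) with a function continuous on [0,1] vanishing at 0 and 1. *)
Lemma ex_RInt_exp_omega (x y : R) : 0 <= x -> x <= y -> y <= 1 -> ex_RInt (fun t => E t) x y.
Proof.
  intros hx hxy hy.
  apply (ex_RInt_ext (fun t => exp (k * t) * Rpower0 t (b - 1) * Rpower0 (1 - t) (c - 1))).
  - intros t ht. rewrite Rmin_left, Rmax_right in ht by lra.
    unfold Rpower0, Rpower, omega.
    destruct (Rlt_dec 0 t); [| lra]. destruct (Rlt_dec 0 (1 - t)); [| lra].
    rewrite <- !exp_plus. f_equal. ring.
  - apply (@ex_RInt_continuous R_CompleteNormedModule). intros t ht.
    rewrite Rmin_left, Rmax_right in ht by lra.
    apply (continuous_mult (fun t => exp (k * t) * Rpower0 t (b - 1))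
             (fun t => Rpower0 (1 - t) (c - 1))).
    + apply (continuous_mult (fun t => exp (k * t))).
      * apply (ex_derive_continuous (fun t => exp (k * t))). auto_derive. easy.
      * apply continuous_Rpower0; lra.
    + apply (continuous_comp (fun t => 1 - t) (fun u => Rpower0 u (c - 1))).
      * apply (ex_derive_continuous (fun t => 1 - t)). auto_derive. easy.
      * apply continuous_Rpower0; lra.
Qed.

Lemma is_RInt_exp_omega_domega (x y : R) : 0 < x -> x <= y -> y < 1 ->
  is_RInt (fun t => E t * dw t) x y (E x - E y).
Proof.
  intros hx hxy hy.
  replace (E x - E y) with (minus (- E y) (- E x)) by (unfold minus, plus, opp; simpl; ring).
  apply (is_RInt_derive (fun t => - E t)); intros t ht;
    rewrite Rmin_left, Rmax_right in ht by lra.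
  - unfold omega, domega. auto_derive; [lra |]. unfold Rminus. field. lra.
  - apply (ex_derive_continuous (fun t => E t * dw t)). unfold omega, domega.
    auto_derive. lra.
Qed.

Lemma RInt_exp_omega_le_tangent (a x y : R) : 0 < a < 1 -> 0 <= x -> x <= y -> y <= 1 ->
  dw a <> 0 ->
  RInt (fun t => E t) x y <= E a / dw a * (exp (- (dw a * (x - a))) - exp (- (dw a * (y - a)))).
Proof.
  intros ha hx hxy hy hW.
  pose proof (is_RInt_exp_affine (E a) (dw a) a x y hW) as htangent.
  rewrite <- (is_RInt_unique _ _ _ _ htangent).
  apply RInt_le; [lra | apply ex_RInt_exp_omega; lra | eexists; exact htangent |].
  intros t ht. apply exp_omega_le_tangent; lra.
Qed.

Lemma RInt_exp_omega_ge (x y D : R) : 0 < x -> x <= y -> y < 1 -> 0 < D ->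
  (forall t, x <= t <= y -> Rabs (dw t) <= D) ->
  Rabs (E x - E y) / D <= RInt (fun t => E t) x y.
Proof.
  intros hx hxy hy hD hdw.
  assert (hsign : forall s, Rabs s = 1 -> s * (E x - E y) / D <= RInt (fun t => E t) x y).
  { intros s hs.
    assert (hint : is_RInt (fun t => s / D * (E t * dw t)) x y (s / D * (E x - E y)))
      by exact (@is_RInt_scal R_NormedModule _ x y (s / D) _
                  (is_RInt_exp_omega_domega x y hx hxy hy)).
    apply Rle_trans with (RInt (fun t => s / D * (E t * dw t)) x y).
    { rewrite (is_RInt_unique _ _ _ _ hint). right. field. lra. }
    apply RInt_le; [lra | eexists; exact hint | apply ex_RInt_exp_omega; lra |].
    intros t ht.
    assert (s * dw t <= D).
    { apply Rle_trans with (Rabs (s * dw t)); [apply Rle_abs |].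
      rewrite Rabs_mult, hs, Rmult_1_l. apply hdw. lra. }
    pose proof (exp_pos (- omega k b c t)).
    replace (s / D * (E t * dw t)) with (E t * (s * dw t / D)) by (field; lra).
    rewrite <- (Rmult_1_r (E t)) at 2. apply Rmult_le_compat_l; [lra |].
    apply (Rdiv_le_1 (s * dw t) D hD); lra. }
  destruct (Rle_or_lt 0 (E x - E y)) as [hpos | hneg].
  - rewrite Rabs_pos_eq, <- (Rmult_1_l (E x - E y)) by exact hpos. apply hsign, Rabs_R1.
  - rewrite Rabs_left by exact hneg.
    replace (- (E x - E y)) with (-1 * (E x - E y)) by ring.
    apply hsign. rewrite Rabs_left; lra.
Qed.

Lemma RInt_exp_omega_right_le (a M : R) : 0 < a -> a < M -> M <= 1 -> 0 < dw a ->
  RInt (fun t => E t) a M <= E a / dw a.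
Proof.
  intros ha haM hM hW.
  eapply Rle_trans; [apply (RInt_exp_omega_le_tangent a); lra |].
  rewrite Rminus_diag, Rmult_0_r, Ropp_0, exp_0.
  pose proof (exp_pos (- (dw a * (M - a)))).
  assert (0 < E a / dw a) by (apply Rdiv_lt_0_compat; [apply exp_pos | lra]).
  nra.
Qed.

Lemma RInt_exp_omega_left_le (m a : R) : 0 <= m -> m < a -> a < 1 -> dw a < 0 ->
  RInt (fun t => E t) m a <= E a / - dw a.
Proof.
  intros hm hma ha hW.
  eapply Rle_trans; [apply (RInt_exp_omega_le_tangent a); lra |].
  rewrite Rminus_diag, Rmult_0_r, Ropp_0, exp_0.
  pose proof (exp_pos (- (dw a * (m - a)))).
  assert (0 < E a / - dw a) by (apply Rdiv_lt_0_compat; [apply exp_pos | lra]).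
  replace (E a / dw a) with (- (E a / - dw a)) by (field; lra).
  nra.
Qed.

Lemma RInt_exp_omega_right_ge (a M : R) : 0 < a -> a < M -> M < 1 -> 0 < dw a ->
  E a / dw M * (1 - exp (- ((M - a) * dw a))) <= RInt (fun t => E t) a M.
Proof.
  intros ha haM hM hW.
  assert (hWM : dw a <= dw M) by (apply domega_le; lra).
  eapply Rle_trans; [| apply (RInt_exp_omega_ge a M (dw M)); try lra].
  - pose proof (exp_omega_le_tangent k b c ltac:(lra) ltac:(lra) a M ltac:(lra) ltac:(lra))
      as htangent.
    replace (E a / dw M * (1 - exp (- ((M - a) * dw a))))
      with (E a * (1 - exp (- ((M - a) * dw a))) / dw M) by (field; lra).
    apply Rmult_le_compat_r; [left; apply Rinv_0_lt_compat; lra |].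
    eapply Rle_trans; [| apply Rle_abs]. rewrite (Rmult_comm (M - a)). lra.
  - intros t ht. rewrite Rabs_pos_eq.
    + apply domega_le; lra.
    + apply Rle_trans with (dw a); [lra | apply domega_le; lra].
Qed.

Lemma RInt_exp_omega_left_ge (m a : R) : 0 < m -> m < a -> a < 1 -> dw a < 0 ->
  E a / - dw m * (1 - exp ((a - m) * dw a)) <= RInt (fun t => E t) m a.
Proof.
  intros hm hma ha hW.
  assert (hWm : dw m <= dw a) by (apply domega_le; lra).
  eapply Rle_trans; [| apply (RInt_exp_omega_ge m a (- dw m)); try lra].
  - pose proof (exp_omega_le_tangent k b c ltac:(lra) ltac:(lra) a m ltac:(lra) ltac:(lra))
      as htangent.
    replace (E a / - dw m * (1 - exp ((a - m) * dw a)))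
      with (E a * (1 - exp ((a - m) * dw a)) / - dw m) by (field; lra).
    apply Rmult_le_compat_r; [left; apply Rinv_0_lt_compat; lra |].
    rewrite Rabs_minus_sym. eapply Rle_trans; [| apply Rle_abs].
    replace ((a - m) * dw a) with (- (dw a * (m - a))) by ring. lra.
  - intros t ht. rewrite Rabs_left1.
    + apply Ropp_le_contravar, domega_le; lra.
    + apply Rle_trans with (dw a); [apply domega_le; lra | lra].
Qed.

End Integrals.

Theorem lemma4 (m a M k b c : R)
  (hm : 0 <= m) (hma : m < a) (haM : a < M) (hM : M <= 1)
  (hk : 0 <= k) (hb : 1 < b) (hc : 1 < c) :
  (0 < Derive (omega k b c) a ->
     RInt (fun t => exp (- omega k b c t)) a M
       <= pref k b c a / Derive (omega k b c) a
     /\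
     RInt (fun t => exp (- omega k b c t)) a M
       >= (if Rlt_dec M 1 then
             pref k b c a / Derive (omega k b c) M
             * (1 - exp (- ((M - a) * Derive (omega k b c) a)))
           else 0))
  /\
  (Derive (omega k b c) a < 0 ->
     RInt (fun t => exp (- omega k b c t)) m a
       <= pref k b c a / (- Derive (omega k b c) a)
     /\
     RInt (fun t => exp (- omega k b c t)) m a
       >= (if Rlt_dec 0 m then
             pref k b c a / (- Derive (omega k b c) m)
             * (1 - exp ((a - m) * Derive (omega k b c) a))
           else 0)).
Proof.
  assert (ha : 0 < a < 1) by lra.
  rewrite (Derive_omega k b c a ha), (pref_exp_omega k b c a ha).
  split; intros hW; split.
  - apply RInt_exp_omega_right_le; lra.
  - apply Rle_ge. destruct (Rlt_dec M 1) as [hM1 | hM1].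
    + rewrite Derive_omega by lra. apply RInt_exp_omega_right_ge; lra.
    + apply RInt_ge_0; [lra | apply ex_RInt_exp_omega; lra |].
      intros; left; apply exp_pos.
  - apply RInt_exp_omega_left_le; lra.
  - apply Rle_ge. destruct (Rlt_dec 0 m) as [hm0 | hm0].
    + rewrite Derive_omega by lra. apply RInt_exp_omega_left_ge; lra.
    + apply RInt_ge_0; [lra | apply ex_RInt_exp_omega; lra |].
      intros; left; apply exp_pos.
Qed.
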